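(* Let $\beta,\mu,\alpha,\omega,\delta,m_1,m_2,a_1,a_2$ be positive real numbers and consider the system of ordinary differential equations $$\dot S = S(\beta-\mu S) - S f_2(I,V),\qquad \dot I = S f_2(I,V) - \alpha I,\qquad \dot V = -\omega V + \delta I,$$ where $$f_2(I,V)=\frac{m_1 I}{a_1+I+V}+\frac{m_2 V}{a_2+I+V}.$$ Define $$\mathcal{R}_0=\frac{m_1a_2+\frac{\delta}{\omega}m_2a_1}{\alpha a_1a_2}\cdot\frac{\beta}{\mu}.$$ Then the system has an equilibrium $(S',I',V')$ with $S'>0$, $I'>0$, $V'>0$ if and only if $\mathcal{R}_0>1$, and when $\mathcal{R}_0>1$ such a positive equilibrium is unique.
   Context: $S$ denotes susceptible fish, $I$ infected fish and $V$ free virus (rescaled); $\beta$ is the birth rate and $\mu$ the density-dependent mortality rate of susceptible fish, $\alpha$ the mortality rate of infected fish, $\delta$ the viral shedding rate, $\omega$ the viral clearance rate, and $m_1,m_2,a_1,a_2$ are parameters of the force of infection. An equilibrium is a point at which all three right-hand sides vanish; a positive (endemic) equilibrium is one with all coordinates strictly positive. *)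

From Stdlib Require Import Reals Lra.
Open Scope R_scope.

Definition f2 (m1 m2 a1 a2 I V : R) : R :=
  m1 * I / (a1 + I + V) + m2 * V / (a2 + I + V).

Definition rhsS (beta mu m1 m2 a1 a2 S I V : R) : R :=
  S * (beta - mu * S) - S * f2 m1 m2 a1 a2 I V.
Definition rhsI (alpha m1 m2 a1 a2 S I V : R) : R :=
  S * f2 m1 m2 a1 a2 I V - alpha * I.
Definition rhsV (omega delta I V : R) : R :=
  - omega * V + delta * I.

Definition is_equilibrium (beta mu alpha omega delta m1 m2 a1 a2 S I V : R) : Prop :=
  rhsS beta mu m1 m2 a1 a2 S I V = 0 /\
  rhsI alpha m1 m2 a1 a2 S I V = 0 /\
  rhsV omega delta I V = 0.

Definition is_positive_equilibrium (beta mu alpha omega delta m1 m2 a1 a2 S I V : R) : Prop :=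
  0 < S /\ 0 < I /\ 0 < V /\
  is_equilibrium beta mu alpha omega delta m1 m2 a1 a2 S I V.

Definition basicR0 (beta mu alpha omega delta m1 m2 a1 a2 : R) : R :=
  (m1 * a2 + delta / omega * m2 * a1) / (alpha * a1 * a2) * (beta / mu).

From Stdlib Require Import Reals Ranalysis5 Lra Psatz.
Open Scope R_scope.

(* At an equilibrium the virus equation forces V = k I with k = delta/omega,
   and on that ray f2(I, kI) = I g(I) with g positive and strictly decreasing
   while I g(I) is strictly increasing.  The infected equation gives
   S = alpha / g(I), and the susceptible equation then says that I is a
   positive root of r(x) = beta - mu alpha / g(x) - x g(x).  This r is strictly
   decreasing and eventually negative, so a positive root exists iff r(0) > 0,
   which is exactly R0 > 1, and it is unique. *)

Lemma saturating_increasing m a c x y : 0 < m -> 0 < a -> 0 <= c -> 0 <= x -> x < y ->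
  m * x / (a + c * x) < m * y / (a + c * y).
Proof.
  intros hm ha hc hx hxy.
  assert (Hdiff : m * y / (a + c * y) - m * x / (a + c * x)
                  = m * a * (y - x) / ((a + c * x) * (a + c * y)))
    by (field; split; nra).
  assert (0 < m * a * (y - x) / ((a + c * x) * (a + c * y)))
    by (apply Rdiv_lt_0_compat; repeat apply Rmult_lt_0_compat; nra).
  lra.
Qed.

Section F2OnRay.

Variables m1 m2 a1 a2 k : R.
Hypotheses (hm1 : 0 < m1) (hm2 : 0 < m2) (ha1 : 0 < a1) (ha2 : 0 < a2) (hk : 0 < k).

Definition f2_slope (x : R) : R :=
  m1 / (a1 + (1 + k) * x) + m2 * k / (a2 + (1 + k) * x).

Lemma f2_slope_pos x : 0 <= x -> 0 < f2_slope x.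
Proof.
  intros hx. unfold f2_slope.
  apply Rplus_lt_0_compat; apply Rdiv_lt_0_compat; nra.
Qed.

Lemma f2_slope_decreasing x y : 0 <= x -> x < y -> f2_slope y < f2_slope x.
Proof.
  intros hx hxy. unfold f2_slope, Rdiv.
  apply Rplus_lt_compat; apply Rmult_lt_compat_l; try nra;
    apply Rinv_lt_contravar; try apply Rmult_lt_0_compat; nra.
Qed.

Lemma mul_f2_slope x :
  0 <= x -> x * f2_slope x = m1 * x / (a1 + (1 + k) * x) + (m2 * k) * x / (a2 + (1 + k) * x).
Proof. intros hx. unfold f2_slope. field. split; nra. Qed.

Lemma mul_f2_slope_increasing x y : 0 <= x -> x < y ->
  x * f2_slope x < y * f2_slope y.
Proof.
  intros hx hxy. rewrite !mul_f2_slope by lra.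
  apply Rplus_lt_compat; apply saturating_increasing; nra.
Qed.

Lemma f2_ray x : 0 <= x -> f2 m1 m2 a1 a2 x (k * x) = x * f2_slope x.
Proof.
  intros hx. rewrite mul_f2_slope by lra. unfold f2.
  replace (a1 + x + k * x) with (a1 + (1 + k) * x) by ring.
  replace (a2 + x + k * x) with (a2 + (1 + k) * x) by ring.
  field. split; nra.
Qed.

Lemma f2_slope_lt_hyperbola x : 0 < x -> f2_slope x < (m1 + m2 * k) / ((1 + k) * x).
Proof.
  intros hx.
  replace ((m1 + m2 * k) / ((1 + k) * x))
    with (m1 / ((1 + k) * x) + m2 * k / ((1 + k) * x)) by (field; nra).
  unfold f2_slope, Rdiv.
  apply Rplus_lt_compat; apply Rmult_lt_compat_l; try nra;
    apply Rinv_lt_contravar; try apply Rmult_lt_0_compat; nra.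
Qed.

Lemma f2_slope_continuous x : 0 <= x -> continuity_pt f2_slope x.
Proof. intros hx. unfold f2_slope. reg; nra. Qed.

End F2OnRay.

Section EquilibriumResidual.

Variables beta mu alpha m1 m2 a1 a2 k : R.
Hypotheses (hbeta : 0 < beta) (hmu : 0 < mu) (halpha : 0 < alpha)
  (hm1 : 0 < m1) (hm2 : 0 < m2) (ha1 : 0 < a1) (ha2 : 0 < a2) (hk : 0 < k).

Let g := f2_slope m1 m2 a1 a2 k.
Let g_pos x : 0 <= x -> 0 < g x.
Proof. exact (f2_slope_pos m1 m2 a1 a2 k hm1 hm2 ha1 ha2 hk x). Qed.

Definition equilibrium_residual (x : R) : R :=
  beta - mu * alpha / g x - x * g x.

Lemma equilibrium_residual_decreasing x y : 0 <= x -> x < y ->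
  equilibrium_residual y < equilibrium_residual x.
Proof.
  intros hx hxy. unfold equilibrium_residual.
  assert (Hg : g y < g x) by (apply f2_slope_decreasing; auto).
  assert (Hxg : x * g x < y * g y) by (apply mul_f2_slope_increasing; auto).
  assert (mu * alpha / g x < mu * alpha / g y).
  { unfold Rdiv. apply Rmult_lt_compat_l; [nra|].
    apply Rinv_lt_contravar; [apply Rmult_lt_0_compat|]; try apply g_pos; lra. }
  lra.
Qed.

Lemma equilibrium_residual_inj x y : 0 <= x -> 0 <= y ->
  equilibrium_residual x = equilibrium_residual y -> x = y.
Proof.
  intros hx hy hxy.
  destruct (Rtotal_order x y) as [Hlt | [Heq | Hgt]]; auto.
  - pose proof (equilibrium_residual_decreasing x y hx Hlt). lra.
  - pose proof (equilibrium_residual_decreasing y x hy Hgt). lra.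
Qed.

Lemma equilibrium_residual_continuous x : 0 <= x -> continuity_pt equilibrium_residual x.
Proof.
  intros hx. pose proof (g_pos x hx).
  assert (continuity_pt g x) by (apply f2_slope_continuous; lra).
  unfold equilibrium_residual.
  apply continuity_pt_minus; [apply continuity_pt_minus|].
  - apply continuity_pt_const. intros u v. reflexivity.
  - apply continuity_pt_div; [apply continuity_pt_const; intros u v; reflexivity | assumption | lra].
  - apply continuity_pt_mult; [apply derivable_continuous_pt, derivable_pt_id | assumption].
Qed.

Lemma equilibrium_residual_neg_somewhere : exists x, 0 < x /\ equilibrium_residual x < 0.
Proof.
  (* x0 is where the bound (m1 + m2 k) / ((1 + k) x) on the slope equals mu alpha / beta *)
  set (x0 := beta * (m1 + m2 * k) / ((1 + k) * (mu * alpha))).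
  assert (hx0 : 0 < x0) by (unfold x0; apply Rdiv_lt_0_compat; repeat apply Rmult_lt_0_compat; nra).
  exists x0. split; [exact hx0|].
  pose proof (g_pos x0 (Rlt_le _ _ hx0)) as hg.
  assert (Hslope : g x0 < mu * alpha / beta).
  { replace (mu * alpha / beta) with ((m1 + m2 * k) / ((1 + k) * x0))
      by (unfold x0; field; repeat split; nra).
    apply f2_slope_lt_hyperbola; auto. }
  assert (beta < mu * alpha / g x0).
  { assert (Hgap : mu * alpha / g x0 - beta = (mu * alpha - beta * g x0) / g x0)
      by (field; lra).
    assert (beta * g x0 < mu * alpha).
    { apply (Rmult_lt_compat_l beta) in Hslope; [|exact hbeta].
      replace (beta * (mu * alpha / beta)) with (mu * alpha) in Hslope by (field; lra).
      exact Hslope. }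
    assert (0 < (mu * alpha - beta * g x0) / g x0) by (apply Rdiv_lt_0_compat; lra).
    lra. }
  unfold equilibrium_residual. fold g. nra.
Qed.

Lemma equilibrium_residual_root_iff :
  (exists x, 0 < x /\ equilibrium_residual x = 0) <-> 0 < equilibrium_residual 0.
Proof.
  split.
  - intros [x [hx Hr]].
    pose proof (equilibrium_residual_decreasing 0 x (Rle_refl 0) hx). lra.
  - intros H0.
    destruct equilibrium_residual_neg_somewhere as [x0 [hx0 Hx0]].
    destruct (IVT_interv (fun x => - equilibrium_residual x) 0 x0) as [z [[hz0 hzx0] Hz]];
      [| lra | lra | lra |].
    + intros a Ha. apply continuity_pt_opp, equilibrium_residual_continuous. lra.
    + exists z. split; [|lra].
      destruct hz0 as [hz0 | <-]; [exact hz0 | lra].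
Qed.

End EquilibriumResidual.

Lemma Rdiv_pos_iff p q : 0 < q -> 0 < p / q <-> 0 < p.
Proof.
  intros hq. split; intros H.
  - replace p with (p / q * q) by (field; lra). nra.
  - apply Rdiv_lt_0_compat; assumption.
Qed.

Section Model.

Variables beta mu alpha omega delta m1 m2 a1 a2 : R.
Hypotheses (hmu : 0 < mu) (halpha : 0 < alpha) (homega : 0 < omega)
  (hdelta : 0 < delta) (hm1 : 0 < m1) (hm2 : 0 < m2) (ha1 : 0 < a1) (ha2 : 0 < a2).

Let k := delta / omega.
Let hk : 0 < k.
Proof. apply Rdiv_lt_0_compat; assumption. Qed.
Let g := f2_slope m1 m2 a1 a2 k.
Let r := equilibrium_residual beta mu alpha m1 m2 a1 a2 k.

Lemma positive_equilibrium_iff S I V :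
  is_positive_equilibrium beta mu alpha omega delta m1 m2 a1 a2 S I V <->
  0 < I /\ V = k * I /\ S = alpha / g I /\ r I = 0.
Proof.
  pose proof hk as hk.
  unfold is_positive_equilibrium, is_equilibrium, rhsS, rhsI, rhsV, r,
    equilibrium_residual.
  fold g.
  split.
  - intros [hS [hI [hV [eS [eI eV]]]]].
    assert (HV : V = k * I).
    { unfold k. replace V with (omega * V / omega) by (field; lra).
      replace (omega * V) with (delta * I) by lra. field. lra. }
    subst V. rewrite f2_ray in eS, eI by lra. fold g in eS, eI.
    assert (hg : 0 < g I) by (apply f2_slope_pos; lra).
    assert (HSg : S * g I = alpha) by (apply (Rmult_eq_reg_l I); lra).
    assert (HS : S = alpha / g I) by (rewrite <- HSg; field; lra).
    assert (Hbal : beta - mu * S - I * g I = 0) by (apply (Rmult_eq_reg_l S); lra).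
    replace (mu * alpha / g I) with (mu * S) by (rewrite HS; field; lra).
    repeat split; assumption.
  - intros [hI [-> [-> Hr]]].
    rewrite f2_ray by lra. fold g.
    assert (hg : 0 < g I) by (apply f2_slope_pos; lra).
    repeat split.
    + apply Rdiv_lt_0_compat; assumption.
    + assumption.
    + apply Rmult_lt_0_compat; assumption.
    + replace (alpha / g I * (beta - mu * (alpha / g I)) - alpha / g I * (I * g I))
        with (alpha / g I * (beta - mu * alpha / g I - I * g I)) by (field; lra).
      rewrite Hr. ring.
    + field. lra.
    + unfold k. field. lra.
Qed.

Lemma basicR0_gt1_iff : 1 < basicR0 beta mu alpha omega delta m1 m2 a1 a2 <-> 0 < r 0.
Proof.
  pose proof hk as hk.
  assert (hg0 : 0 < g 0) by (apply f2_slope_pos; lra).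
  assert (hR0 : basicR0 beta mu alpha omega delta m1 m2 a1 a2
                = 1 + (beta * g 0 - mu * alpha) / (alpha * mu)).
  { unfold basicR0, g, f2_slope. fold k. field. repeat split; lra. }
  assert (hr0 : r 0 = (beta * g 0 - mu * alpha) / g 0).
  { unfold r, equilibrium_residual. fold g. field. lra. }
  rewrite hR0, hr0, Rdiv_pos_iff by lra.
  rewrite <- (Rdiv_pos_iff _ (alpha * mu)) by nra.
  lra.
Qed.

End Model.

Theorem mainTheorem1 (beta mu alpha omega delta m1 m2 a1 a2 : R)
  (hbeta : 0 < beta) (hmu : 0 < mu) (halpha : 0 < alpha) (homega : 0 < omega)
  (hdelta : 0 < delta) (hm1 : 0 < m1) (hm2 : 0 < m2) (ha1 : 0 < a1) (ha2 : 0 < a2) :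
  ((exists S I V, is_positive_equilibrium beta mu alpha omega delta m1 m2 a1 a2 S I V)
     <-> 1 < basicR0 beta mu alpha omega delta m1 m2 a1 a2) /\
  (1 < basicR0 beta mu alpha omega delta m1 m2 a1 a2 ->
     forall S I V S' I' V',
       is_positive_equilibrium beta mu alpha omega delta m1 m2 a1 a2 S I V ->
       is_positive_equilibrium beta mu alpha omega delta m1 m2 a1 a2 S' I' V' ->
       S = S' /\ I = I' /\ V = V').
Proof.
  assert (hk : 0 < delta / omega) by (apply Rdiv_lt_0_compat; assumption).
  pose proof (positive_equilibrium_iff beta mu alpha omega delta m1 m2 a1 a2
                halpha homega hdelta hm1 hm2 ha1 ha2) as Heq.
  rewrite basicR0_gt1_iff, <- equilibrium_residual_root_iff by assumption.
  split; [split|].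
  - intros [S [I [V HE]]]. apply Heq in HE as [hI [_ [_ Hr]]]. exists I. auto.
  - intros [I [hI Hr]].
    exists (alpha / f2_slope m1 m2 a1 a2 (delta / omega) I), I, (delta / omega * I).
    apply Heq. auto.
  - intros _ S I V S' I' V' HE HE'.
    apply Heq in HE as [hI [-> [-> Hr]]], HE' as [hI' [-> [-> Hr']]].
    assert (I = I') by (apply (equilibrium_residual_inj beta mu alpha m1 m2 a1 a2 (delta / omega)); lra).
    subst I'. auto.
Qed.
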